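(* Let $N\geq 2$ be an integer. For real $\theta$ and $\varepsilon\geq 0$ let $G_\theta(\varepsilon)=(1+\theta)^N+\big(1-\theta(1+\varepsilon)\big)^N-2$ and $\varepsilon_c(\theta)=\inf\{\varepsilon>0: G_\theta(\varepsilon)\leq 0\}$ (with $\inf\emptyset=+\infty$). For positive $\theta\neq 2^{1/N}-1$ define $$f(\theta)=\big(2-(1+\theta)^N\big)^{1/N}-1+\theta(1+\theta)^{N-1}\big(2-(1+\theta)^N\big)^{\frac1N-1}.$$ Then on the interval $0<\theta<2^{1/N}-1$ the function $\varepsilon_c$ is differentiable and monotonically increasing, with derivative $$\varepsilon_c'(\theta)=\frac{f(\theta)}{\theta^2}.$$
   Context: Root convention: for real $X>0$, $X^{1/N}$ is the positive real $N$-th root; for $X<0$ and $N$ odd, $X^{1/N}=-|X|^{1/N}$; and for an integer $m$, $X^{1/N-m}$ is defined as $Y^{1/N}$ with $Y=X^{1-mN}$, evaluated by the same convention. On the interval $0<\theta<2^{1/N}-1$ one has $2-(1+\theta)^N>0$, so all roots are ordinary positive roots. *)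

From Stdlib Require Import Reals Lra.
From Coquelicot Require Import Coquelicot.
Open Scope R_scope.

(* Real N-th root with the paper's convention:
   X>0: positive root; X<0, N odd: -|X|^(1/N); X = 0: 0
   (X<0, N even: undefined in the paper; we return 0, never used). *)
Definition nroot (N : nat) (X : R) : R :=
  if Rlt_dec 0 X then Rpower X (/ INR N)
  else if Rlt_dec X 0 then
         (if Nat.odd N then - Rpower (- X) (/ INR N) else 0)
  else 0.

(* X^(1/N - m) := (X^(1 - m N))^(1/N) *)
Definition nroot_shift (N : nat) (m : Z) (X : R) : R :=
  nroot N (powerRZ X (1 - m * Z.of_nat N)%Z).

Definition G (N : nat) (theta eps : R) : R :=
  (1 + theta) ^ N + (1 - theta * (1 + eps)) ^ N - 2.

Definition eps_c (N : nat) (theta : R) : Rbar :=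
  Glb_Rbar (fun eps => 0 < eps /\ G N theta eps <= 0).

Definition f_paper (N : nat) (theta : R) : R :=
  nroot N (2 - (1 + theta) ^ N) - 1
  + theta * (1 + theta) ^ (N - 1) * nroot_shift N 1 (2 - (1 + theta) ^ N).

Definition theta_max (N : nat) : R := nroot N 2 - 1.

From Stdlib Require Import Reals Lra Lia.
From Coquelicot Require Import Coquelicot.
Open Scope R_scope.

(* Let a = 1 + θ and β = (2 - a^N)^(1/N), so that a^N + β^N = 2.  Convexity of
   x^N gives 0 < β < 1 - θ, and G_θ(ε) = (1 - θ(1 + ε))^N - β^N is positive
   while 1 - θ(1 + ε) > β and vanishes at equality; hence ε_c(θ) = (1 - β)/θ - 1, a smooth
   function of θ whose derivative is f(θ)/θ^2.  Moreover
   f = (2 - a^(N-1) - β^(N-1)) / β^(N-1), and the power-mean inequality (from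
   the weighted AM-GM inequality (n+1) x^n <= n x^(n+1) + 1) turns
   a^N + β^N = 2 into a^(N-1) + β^(N-1) < 2, so f > 0 and ε_c increases. *)

Lemma Rpow_lt_mono_l x y n : 0 <= x < y -> (0 < n)%nat -> x ^ n < y ^ n.
Proof.
  intros [Hx Hxy] Hn. destruct n as [|n]; [lia|]. clear Hn.
  induction n as [|n IH]; [simpl; lra|].
  assert (0 <= x ^ S n) by (apply pow_le; lra).
  change (x * x ^ S n < y * y ^ S n). nra.
Qed.

Lemma pow_sub_1_mul_sub_1_ge0 x k : 0 <= x -> 0 <= (x ^ k - 1) * (x - 1).
Proof.
  intros Hx. destruct (Rle_dec x 1) as [Hx1|Hx1].
  - assert (x ^ k <= 1) by (rewrite <- (pow1 k); apply pow_incr; lra). nra.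
  - assert (1 <= x ^ k) by (apply pow_R1_Rle; lra). nra.
Qed.

Lemma pow_succ_AM_GM x n : 0 < x -> x <> 1 -> (1 <= n)%nat ->
  INR (S n) * x ^ n < INR n * x ^ S n + 1.
Proof.
  intros Hx Hx1 Hn. induction n as [|n IH]; [lia|].
  destruct (Nat.eq_dec n 0) as [->|Hn0].
  - assert (0 < (x - 1) ^ 2) by (apply pow2_gt_0; lra). simpl in *. nra.
  - assert (E : INR (S n) * x ^ S (S n) + 1 - INR (S (S n)) * x ^ S n
                = x * (INR n * x ^ S n + 1 - INR (S n) * x ^ n)
                  + (x ^ S n - 1) * (x - 1))
      by (rewrite !S_INR; simpl; ring).
    pose proof (pow_sub_1_mul_sub_1_ge0 x (S n) ltac:(lra)).
    assert (0 < x * (INR n * x ^ S n + 1 - INR (S n) * x ^ n)).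
    { apply Rmult_lt_0_compat; [lra|]. specialize (IH ltac:(lia)). lra. }
    lra.
Qed.

Lemma pow_add_pow_lt_2 a b n : 0 < a -> 0 < b -> a <> 1 -> (1 <= n)%nat ->
  a ^ S n + b ^ S n = 2 -> a ^ n + b ^ n < 2.
Proof.
  intros Ha Hb Ha1 Hn Hsum.
  pose proof (pow_succ_AM_GM a n Ha Ha1 Hn) as Ha'.
  assert (Hb' : INR (S n) * b ^ n <= INR n * b ^ S n + 1).
  { destruct (Req_dec b 1) as [->|Hb1].
    - rewrite !pow1, S_INR. lra.
    - left. now apply pow_succ_AM_GM. }
  rewrite S_INR in Ha', Hb'. pose proof (pos_INR n). nra.
Qed.

Lemma two_lt_pow_1_add_add_pow_1_sub t n : 0 < t <= 1 -> (2 <= n)%nat ->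
  2 < (1 + t) ^ n + (1 - t) ^ n.
Proof.
  intros Ht Hn. induction n as [|n IH]; [lia|].
  destruct (Nat.eq_dec n 1) as [->|Hn1]; [simpl; nra|].
  specialize (IH ltac:(lia)).
  assert ((1 - t) ^ n <= (1 + t) ^ n) by (apply pow_incr; lra).
  simpl. nra.
Qed.

Lemma Rpower_inv_INR_pow x n : 0 < x -> (0 < n)%nat -> Rpower x (/ INR n) ^ n = x.
Proof.
  intros Hx Hn. rewrite <- Rpower_pow by (unfold Rpower; apply exp_pos).
  rewrite Rpower_mult, Rinv_l by (apply not_0_INR; lia).
  now apply Rpower_1.
Qed.

Lemma nroot_pos N X : 0 < X -> nroot N X = Rpower X (/ INR N).
Proof. intros HX. unfold nroot. now destruct (Rlt_dec 0 X). Qed.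

Lemma nroot_shift_1 N X : (0 < N)%nat -> 0 < X -> nroot_shift N 1 X = nroot N X / X.
Proof.
  intros HN HX. unfold nroot_shift.
  rewrite powerRZ_Rpower, !nroot_pos, Rpower_mult by (unfold Rpower; apply exp_pos || lra).
  rewrite minus_IZR, mult_IZR, <- INR_IZR_INZ.
  replace ((IZR 1 - IZR 1 * INR N) * / INR N) with (/ INR N + - (1))
    by (simpl; field; apply not_0_INR; lia).
  now rewrite Rpower_plus, Rpower_Ropp, Rpower_1.
Qed.

Lemma pow_1_add_lt_2 N t : (0 < N)%nat -> 0 <= t < theta_max N -> (1 + t) ^ N < 2.
Proof.
  intros HN Ht. unfold theta_max in Ht. rewrite nroot_pos in Ht by lra.
  rewrite <- (Rpower_inv_INR_pow 2 N) by (lra || lia).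
  apply Rpow_lt_mono_l; [lra | lia].
Qed.

(* The value of 1 - θ(1 + ε) at which G_θ(ε) vanishes. *)
Definition beta (N : nat) (t : R) : R := Rpower (2 - (1 + t) ^ N) (/ INR N).

Lemma beta_pos N t : 0 < beta N t.
Proof. apply exp_pos. Qed.

Lemma beta_pow N t : (0 < N)%nat -> (1 + t) ^ N < 2 -> beta N t ^ N = 2 - (1 + t) ^ N.
Proof. intros HN HtN. apply Rpower_inv_INR_pow; [lra | lia]. Qed.

Lemma beta_lt_1_sub N t : (2 <= N)%nat -> 0 < t -> (1 + t) ^ N < 2 -> beta N t < 1 - t.
Proof.
  intros HN Ht HtN.
  assert (Ht1 : t < 1).
  { assert ((1 + t) ^ 1 <= (1 + t) ^ N) by (apply Rle_pow; lra || lia).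
    rewrite pow_1 in *. lra. }
  apply Rnot_le_lt. intros Hb.
  assert ((1 - t) ^ N <= beta N t ^ N) by (apply pow_incr; lra).
  rewrite beta_pow in * by (lia || lra).
  pose proof (two_lt_pow_1_add_add_pow_1_sub t N ltac:(lra) HN). lra.
Qed.

Lemma eps_c_eq N t : (2 <= N)%nat -> 0 < t -> (1 + t) ^ N < 2 ->
  eps_c N t = Finite ((1 - beta N t) / t - 1).
Proof.
  intros HN Ht HtN.
  pose proof (beta_pos N t) as Hb0. pose proof (beta_lt_1_sub N t HN Ht HtN) as Hb1.
  assert (HG : forall e, G N t e = (1 - t * (1 + e)) ^ N - beta N t ^ N)
    by (intros e; unfold G; rewrite beta_pow by (lia || lra); ring).
  assert (Hq : (1 - beta N t) / t * t = 1 - beta N t) by (field; lra).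
  unfold eps_c. apply is_glb_Rbar_unique. split.
  - intros e [He HGe]. simpl. apply Rnot_lt_le. intros Hlt.
    assert (beta N t ^ N < (1 - t * (1 + e)) ^ N) by (apply Rpow_lt_mono_l; nra || lia).
    rewrite HG in HGe. lra.
  - intros l Hl. apply Hl. split.
    + nra.
    + rewrite HG. replace (1 - t * (1 + ((1 - beta N t) / t - 1))) with (beta N t)
        by (field; lra).
      lra.
Qed.

Lemma f_paper_eq N t : (0 < N)%nat -> (1 + t) ^ N < 2 ->
  f_paper N t = beta N t - 1 + t * (1 + t) ^ (N - 1) * beta N t / (2 - (1 + t) ^ N).
Proof.
  intros HN HtN. unfold f_paper.
  rewrite nroot_shift_1, !nroot_pos by (lia || lra).
  unfold beta. field. lra.
Qed.

Lemma f_paper_pos N t : (2 <= N)%nat -> 0 < t -> (1 + t) ^ N < 2 -> 0 < f_paper N t.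
Proof.
  intros HN Ht HtN. rewrite f_paper_eq by (lia || lra).
  pose proof (beta_pos N t) as Hb0. pose proof (beta_lt_1_sub N t HN Ht HtN).
  assert (Hab : (1 + t) ^ N + beta N t ^ N = 2) by (rewrite beta_pow by (lia || lra); ring).
  set (a := 1 + t) in *. set (b := beta N t) in *.
  destruct N as [|n]; [lia|]. replace (S n - 1)%nat with n by lia.
  pose proof (pow_add_pow_lt_2 a b n ltac:(unfold a; lra) Hb0 ltac:(unfold a; lra)
                ltac:(lia) Hab).
  assert (Hbn : 0 < b ^ n) by (apply pow_lt; lra).
  replace (b - 1 + t * a ^ n * b / (2 - a ^ S n)) with ((2 - a ^ n - b ^ n) / b ^ n).
  - apply Rdiv_lt_0_compat; lra.
  - assert (0 < b * b ^ n) by (apply Rmult_lt_0_compat; lra).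
    rewrite <- Hab. unfold a. simpl. field. split; lra.
Qed.

Lemma is_derive_beta N t : (0 < N)%nat -> (1 + t) ^ N < 2 ->
  is_derive (beta N) t (- (1 + t) ^ (N - 1) * beta N t / (2 - (1 + t) ^ N)).
Proof.
  intros HN HtN. unfold beta, Rpower. auto_derive; [lra|].
  change (2 + - (1 + t) ^ N) with (2 - (1 + t) ^ N).
  replace (Nat.pred N) with (N - 1)%nat by lia.
  field. split; [lra | apply not_0_INR; lia].
Qed.

Lemma is_derive_eps_c N t : (2 <= N)%nat -> 0 < t < theta_max N ->
  is_derive (fun s => real (eps_c N s)) t (f_paper N t / t ^ 2).
Proof.
  intros HN Ht. pose proof (pow_1_add_lt_2 N t ltac:(lia) ltac:(lra)) as HtN.
  apply (is_derive_ext_loc (fun s => (1 - beta N s) / s - 1)).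
  - apply (locally_interval _ t 0 (theta_max N)); [easy | easy |].
    intros s Hs0 Hs1. simpl in Hs0, Hs1.
    rewrite eps_c_eq; [reflexivity | lia | lra |].
    apply pow_1_add_lt_2; [lia | lra].
  - pose proof (is_derive_beta N t ltac:(lia) HtN) as Hb.
    rewrite f_paper_eq by (lia || lra).
    auto_derive.
    + split; [eexists; exact Hb | split; [lra | easy]].
    + change (Derive (fun s => beta N s) t) with (Derive (beta N) t).
      rewrite (is_derive_unique _ _ _ Hb). field. lra.
Qed.

Theorem lemma2 (N : nat) (HN : (2 <= N)%nat) :
  (* eps_c is finite on the interval *)
  (forall theta, 0 < theta < theta_max N ->
     eps_c N theta = Finite (real (eps_c N theta)))
  (* differentiable with derivative f(theta)/theta^2 *)
  /\ (forall theta, 0 < theta < theta_max N ->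
        is_derive (fun t => real (eps_c N t)) theta (f_paper N theta / theta ^ 2))
  (* monotonically increasing *)
  /\ (forall t1 t2, 0 < t1 -> t1 < t2 -> t2 < theta_max N ->
        real (eps_c N t1) < real (eps_c N t2)).
Proof.
  assert (HtN : forall t, 0 < t < theta_max N -> (1 + t) ^ N < 2)
    by (intros t Ht; apply pow_1_add_lt_2; [lia | lra]).
  split; [|split].
  - intros t Ht. rewrite eps_c_eq by (auto || lia || lra). reflexivity.
  - intros t Ht. now apply is_derive_eps_c.
  - intros t1 t2 H1 H12 H2.
    apply (incr_function (fun t => real (eps_c N t)) 0 (theta_max N)
             (fun t => f_paper N t / t ^ 2)); try (simpl; lra).
    + intros t Ht0 Ht1. simpl in Ht0, Ht1. apply is_derive_eps_c; [lia | lra].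
    + intros t Ht0 Ht1. simpl in Ht0, Ht1. apply Rdiv_lt_0_compat.
      * apply f_paper_pos; auto.
      * now apply pow_lt.
Qed.
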